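(* Let $D_1,\dots,D_n$ be growing disks with centers $p_1,\dots,p_n\in\mathbb{R}^2$ and growth rates $v_1,\dots,v_n>0$, and let $t_1,\dots,t_n$ be their elimination times (with $t_1=\infty$). Let $i\in\{2,\dots,n\}$ and let \[ j^*=\operatorname{argmin}_{j=1,\dots,i-1}\{t(i,j)\mid t(i,j)\le t_j\}. \] Then $t_i=t(i,j^* )$, i.e., the disk $D_i$ is eliminated by the disk $D_{j^*}$.
   Context: Growing prioritized disks: at time $t\ge 0$ the disk $D_i$ is the closed disk centered at $p_i$ of radius $tv_i$. The index is the priority (smaller index = higher priority). For $i\ne j$, $t(i,j)=|p_ip_j|/(v_i+v_j)$ is the time at which $D_i$ and $D_j$ would touch. Whenever two disks $D_i,D_j$ with $i<j$ touch at time $t(i,j)$ and neither has been removed before that time, $D_j$ is removed at that time while $D_i$ keeps growing. The elimination time $t_i$ is the time at which $D_i$ is removed; $D_1$ is never removed, so $t_1=\infty$. General position is assumed: all times $t(i,j)$, $i\neq j$, are pairwise distinct. *)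

From HB Require Import structures.
From mathcomp Require Import all_boot all_order all_algebra.
Set Implicit Arguments. Unset Strict Implicit. Unset Printing Implicit Defensive.
Import Order.TTheory GRing.Theory Num.Theory.
Local Open Scope ring_scope.

(* Disks are indexed by 'I_n (0-based): index 0 is the paper's D_1, and the
   priority order is the order on indices (smaller index = higher priority). *)

Section GrowingDisks.
Variables (R : rcfType) (n : nat) (p : 'I_n -> R * R) (v : 'I_n -> R).

Definition dist (i j : 'I_n) : R :=
  Num.sqrt (((p i).1 - (p j).1) ^+ 2 + ((p i).2 - (p j).2) ^+ 2).

Definition touch_time (i j : 'I_n) : R := dist i j / (v i + v j).

(* Elimination times as extended reals: None = +infinity (never removed). *)
Definition ext_le (a : R) (b : option R) : bool :=
  if b is Some y then a <= y else true.

Definition events : seq ('I_n * 'I_n) :=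
  sort (fun e f => touch_time e.1 e.2 <= touch_time f.1 f.2)
       [seq e : 'I_n * 'I_n <- [seq (i, j) | i <- enum 'I_n, j <- enum 'I_n] | (e.1 < e.2)%N].

Definition step (T : 'I_n -> option R) (e : 'I_n * 'I_n) : 'I_n -> option R :=
  let: (i, j) := e in
  if (T i == None) && (T j == None) then
    fun k => if k == j then Some (touch_time i j) else T k
  else T.

Definition elim_time : 'I_n -> option R := foldl step (fun _ => None) events.

(* General position: the times t(i,j), i <> j, are pairwise distinct
   (as unordered pairs; note t(i,j) = t(j,i)). *)
Definition general_position : Prop :=
  forall i j k l : 'I_n, i != j -> k != l -> touch_time i j = touch_time k l ->
    (i = k /\ j = l) \/ (i = l /\ j = k).

End GrowingDisks.

From HB Require Import structures.
From mathcomp Require Import all_boot all_order all_algebra.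
Set Implicit Arguments. Unset Strict Implicit. Unset Printing Implicit Defensive.
Import Order.TTheory GRing.Theory Num.Theory.
Local Open Scope ring_scope.

(* Under general position the simulation handles the touching events at
   strictly increasing times.  When it reaches the event (jstar, i), both
   disks are still present: an earlier removal of D_jstar would give
   t_jstar < t(i,jstar), contradicting admissibility of jstar, and an
   earlier removal of D_i by some D_j with j < i would happen at a time
   t(i,j) < t(i,jstar) while D_j is still present, so t(i,j) <= t_j and j
   would be an admissible candidate beating jstar.  Hence this event removes
   D_i at time t(i,jstar). *)

Section Simulation.
Variables (R : rcfType) (n : nat) (p : 'I_n -> R * R) (v : 'I_n -> R).

Local Notation touch_time := (touch_time p v).
Local Notation events := (events p v).
Local Notation step := (step p v).
Local Notation elim_time := (elim_time p v).

Lemma touch_timeC i j : touch_time i j = touch_time j i.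
Proof.
by rewrite /touch_time /dist (addrC (v i)) -sqrrN opprB -[X in _ + X]sqrrN opprB.
Qed.

Definition event_time (e : 'I_n * 'I_n) : R := touch_time e.1 e.2.

Lemma mem_events i j : ((i, j) \in events) = (i < j)%N.
Proof.
rewrite mem_sort mem_filter /=; case: ltnP => //= _.
by apply: (allpairs_f (fun i j => (i, j))); rewrite mem_enum.
Qed.

Lemma uniq_events : uniq events.
Proof.
rewrite sort_uniq filter_uniq // allpairs_uniq ?enum_uniq //.
by move=> [a b] [c d] _ _ /= ->.
Qed.

Definition state (m : nat) : 'I_n -> option R :=
  foldl step (fun _ => None) (take m events).

Lemma state0 : state 0 = fun _ => None.
Proof. by rewrite /state take0. Qed.

Lemma state_succ e0 m : (m < size events)%N ->
  state m.+1 = step (state m) (nth e0 events m).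
Proof. by move=> ms; rewrite /state (take_nth e0 ms) foldl_rcons. Qed.

Lemma state_oversize m : (size events <= m)%N -> state m = elim_time.
Proof. by move=> sm; rewrite /state take_oversize. Qed.

Lemma step_none T i j k y : T k = None -> step T (i, j) k = Some y ->
  [/\ j = k, T i = None & y = touch_time i j].
Proof.
move=> Tk /=; case: ifP => [/andP [/eqP Ti /eqP Tj]|_]; last by rewrite Tk.
by case: eqP => [-> [<-]|_]; [split | rewrite Tk].
Qed.

Lemma foldl_step_removed T es k y : T k = Some y -> foldl step T es k = Some y.
Proof.
elim: es T => [//|[i j] es IH] T Tk /=; apply: IH => /=.
by case: ifP => // /andP [_ /eqP Tj]; case: eqP => // kj; rewrite kj Tj in Tk.
Qed.

Lemma state_removed m m' k y : (m <= m')%N -> state m k = Some y -> state m' k = Some y.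
Proof.
move=> mm' Tk; rewrite /state -(cat_take_drop m (take m' events)) foldl_cat.
by rewrite take_takel //; apply: foldl_step_removed.
Qed.

Lemma elim_time_removed m k y : state m k = Some y -> elim_time k = Some y.
Proof.
rewrite -(@state_oversize (maxn m (size events))) ?leq_maxr //.
exact: state_removed (leq_maxl _ _).
Qed.

Lemma state_removal e0 m k y : state m k = Some y -> exists m0 i,
  [/\ (m0 < m)%N, (m0 < size events)%N, nth e0 events m0 = (i, k),
      state m0 i = None & state m0 k = None] /\ y = touch_time i k.
Proof.
elim: m => [|m IH]; first by rewrite state0.
case Tk: (state m k) => [y'|] Tk'.
  have y'y : y' = y by move: (state_removed (leqnSn m) Tk); rewrite Tk' => -[].
  move: Tk; rewrite y'y => /IH [m0 [i [[lt0 ? ? ? ?] ->]]].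
  by exists m0, i; split => //; split => //; apply: ltnW.
have [ms|sm] := ltnP m (size events); last first.
  by move: Tk'; rewrite state_oversize ?(leqW sm) // -(state_oversize sm) Tk.
move: Tk'; rewrite (state_succ e0 ms); case E: (nth e0 events m) => [i j] Tk'.
have [jk Ti ->] := step_none Tk Tk'; rewrite -jk in E Tk *.
by exists m, i; split.
Qed.

Hypothesis gp : general_position p v.

Lemma event_time_inj_in : {in events &, injective event_time}.
Proof.
move=> [a b] [c d]; rewrite !mem_events /event_time /= => ab cd tt_eq.
have [[-> ->] //|[ad bc]] :=
  @gp a b c d (negbT (ltn_eqF ab)) (negbT (ltn_eqF cd)) tt_eq.
by move: ab; rewrite ad bc => /(ltn_trans cd); rewrite ltnn.
Qed.

Lemma events_time_lt e0 m1 m2 : (m1 < m2)%N -> (m2 < size events)%N ->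
  event_time (nth e0 events m1) < event_time (nth e0 events m2).
Proof.
move=> m12 m2s.
have sorted_times : sorted <%R [seq event_time e | e <- events].
  rewrite lt_sorted_uniq_le map_inj_in_uniq ?uniq_events ?sorted_map //; last first.
    exact: event_time_inj_in.
  by apply: sort_sorted => e f; apply: le_total.
rewrite -!(nth_map e0 0) ?(ltn_trans m12) //.
by apply: (sorted_ltn_nth lt_trans) => //; rewrite inE size_map ?(ltn_trans m12).
Qed.

Lemma removed_before e0 m k y : (m < size events)%N ->
  state m k = Some y -> y < event_time (nth e0 events m).
Proof.
move=> ms /(state_removal e0) [m0 [i [[m0m _ E _ _] ->]]].
by rewrite -[touch_time _ _]/(event_time (i, k)) -E; apply: events_time_lt.
Qed.

Lemma removed_after e0 m k y : state m k = None -> elim_time k = Some y ->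
  event_time (nth e0 events m) <= y.
Proof.
move=> Tk; rewrite -(@state_oversize (size events)) // => /(state_removal e0).
move=> [m0 [i [[m0s _ E Ti Tk0] ->]]].
have [m0m|mm0] := ltnP m0 m.
  suff : state m0.+1 k = Some (touch_time i k) by move/(state_removed m0m); rewrite Tk.
  by rewrite (state_succ e0 m0s) E /= Ti Tk0 /= eqxx.
rewrite -[touch_time i k]/(event_time (i, k)) -E.
move: mm0; rewrite leq_eqVlt => /predU1P [<- //|mm0].
exact/ltW/events_time_lt.
Qed.

Lemma remover_admissible e0 m j k : (m < size events)%N ->
  nth e0 events m = (j, k) -> state m j = None -> ext_le (touch_time j k) (elim_time j).
Proof.
move=> ms E Tj; rewrite /ext_le; case Ej: (elim_time j) => [y|] //.
by rewrite -[touch_time j k]/(event_time (j, k)) -E (removed_after _ Tj Ej).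
Qed.

End Simulation.

Theorem lemma1 (R : rcfType) (n : nat) (p : 'I_n -> R * R) (v : 'I_n -> R)
  (hv : forall k, 0 < v k) (hgp : general_position p v)
  (i : 'I_n) (hi : (0 < i)%N) (jstar : 'I_n)
  (hj_lt : (jstar < i)%N)
  (hj_adm : ext_le (touch_time p v i jstar) (elim_time p v jstar))
  (hj_min : forall j : 'I_n, (j < i)%N ->
              ext_le (touch_time p v i j) (elim_time p v j) ->
              touch_time p v i jstar <= touch_time p v i j) :
  elim_time p v i = Some (touch_time p v i jstar).
Proof.
pose e := (jstar, i).
have e_in : e \in events p v by rewrite mem_events.
pose m := index e (events p v).
have ms : (m < size (events p v))%N by rewrite index_mem.
have Em : nth e (events p v) m = e := nth_index e e_in.
have tm : event_time p v e = touch_time p v i jstar by rewrite /event_time touch_timeC.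
have jstar_present : state p v m jstar = None.
  case Tj: (state p v m jstar) => [y|] //.
  have := removed_before hgp e ms Tj; rewrite Em tm => y_lt.
  by move: hj_adm; rewrite (elim_time_removed Tj) /= leNgt y_lt.
have i_present : state p v m i = None.
  case Ti: (state p v m i) => [y|] //.
  have [m0 [j [[m0m m0s Em0 Tj _] _]]] := state_removal e Ti.
  have ji : (j < i)%N by rewrite -(mem_events p v) -Em0 mem_nth.
  have j_adm : ext_le (touch_time p v i j) (elim_time p v j).
    by rewrite touch_timeC; exact: remover_admissible Em0 Tj.
  have tji : touch_time p v i j < touch_time p v i jstar.
    rewrite touch_timeC -[touch_time p v j i]/(event_time p v (j, i)) -tm.
    by rewrite -Em -Em0 events_time_lt.
  by move: (hj_min _ ji j_adm); rewrite leNgt tji.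
have : state p v m.+1 i = Some (touch_time p v i jstar).
  by rewrite (state_succ e ms) Em /= i_present jstar_present eqxx /= eqxx touch_timeC.
exact: elim_time_removed.
Qed.
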